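(* Let $\Omega,\Omega^*$ be two compact metric spaces and let $c\in C(\Omega\times\Omega^* )$. Let $\mu_1,\mu_2$ be two Borel probability measures on $\Omega$ and let $\nu$ be a Borel probability measure on $\Omega^*$. For $i=1,2$, take $\phi_i\in\Phi_c(\mu_i,\nu)$. Let $U$ be a Borel subset of $\Omega$ and suppose that $\mu_1\leq\mu_2$ on $U$ and that $\phi_1\leq\phi_2$ on $\Omega\setminus U$. Then \[ \phi_1\wedge\phi_2\in\Phi_c(\mu_1,\nu)\quad\text{and}\quad \phi_1\vee\phi_2\in\Phi_c(\mu_2,\nu). \] Additionally, $\phi_1\leq\phi_2$ on the support of $\mu_2-\mu_1$.
   Context: For $\phi\in C(\Omega)$, its $c$-transform is $\phi^c(y)=\sup_{x\in\Omega}\phi(x)-c(x,y)$, $y\in\Omega^*$ (a continuous function). For positive finite Borel measures $\mu$ on $\Omega$ and $\nu$ on $\Omega^*$, the optimal transport cost is $\mathcal T_c(\mu,\nu)=\inf_{\pi\in\Pi(\mu,\nu)}\int c\,d\pi$, where $\Pi(\mu,\nu)$ is the set of positive measures on $\Omega\times\Omega^*$ with marginals $\mu,\nu$ (and $\mathcal T_c=+\infty$ if the masses differ); by duality $\mathcal T_c(\mu,\nu)=\max_{\phi\in C(\Omega)}\int_\Omega\phi\,d\mu-\int_{\Omega^*}\phi^c\,d\nu$. The set of Kantorovich potentials is $\Phi_c(\mu,\nu)=\{\phi\in C(\Omega):\int_\Omega\phi\,d\mu-\int_{\Omega^*}\phi^c\,d\nu=\mathcal T_c(\mu,\nu)\}$.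 $\wedge,\vee$ denote pointwise minimum and maximum. ''$\mu_1\leq\mu_2$ on $U$'' means $\mu_1(A)\leq\mu_2(A)$ for every Borel $A\subset U$. The support of a signed measure $\sigma$ is the support of its total variation $|\sigma|$, i.e. the complement of the largest open set of $|\sigma|$-measure zero. *)

From HB Require Import structures.
From mathcomp Require Import all_boot all_order all_algebra.
From mathcomp Require Import all_classical all_reals all_analysis.
Set Implicit Arguments. Unset Strict Implicit. Unset Printing Implicit Defensive.
Import Order.TTheory GRing.Theory Num.Theory.
Import numFieldNormedType.Exports.
Local Open Scope classical_set_scope.
Local Open Scope ring_scope.

Definition Borel (T : ptopologicalType) := g_sigma_algebraType (@open T).

Section OT.
Context (R : realType) (T1 T2 : ptopologicalType).

Definition ctrans (c : T1 * T2 -> R) (phi : T1 -> R) (y : T2) : R :=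
  sup [set phi x - c (x, y) | x in [set: T1]].

Definition couplings (mu : {measure set (Borel T1) -> \bar R})
    (nu : {measure set (Borel T2) -> \bar R}) :
    set {measure set (Borel T1 * Borel T2)%type -> \bar R} :=
  [set pi | (forall A : set (Borel T1), measurable A ->
               pi (A `*` [set: Borel T2]) = mu A) /\
            (forall B : set (Borel T2), measurable B ->
               pi ([set: Borel T1] `*` B) = nu B)].

(* T_c(mu,nu) = inf_{pi in Pi(mu,nu)} int c dpi  (= +oo if Pi(mu,nu) is empty) *)
Definition ot_cost (c : T1 * T2 -> R) (mu : {measure set (Borel T1) -> \bar R})
    (nu : {measure set (Borel T2) -> \bar R}) : \bar R :=
  ereal_inf [set (\int[pi]_z (c z)%:E)%E | pi in couplings mu nu].

Definition kpotentials (c : T1 * T2 -> R) (mu : {measure set (Borel T1) -> \bar R})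
    (nu : {measure set (Borel T2) -> \bar R}) : set (T1 -> R) :=
  [set phi | continuous phi /\
     (\int[mu]_x (phi x)%:E - \int[nu]_y (ctrans c phi y)%:E)%E = ot_cost c mu nu].
End OT.

Section Support.
Context (R : realType) (T : ptopologicalType).

(* total variation |mu2 - mu1|(E) of the signed measure mu2 - mu1 (for finite
   measures): sup over finite Borel partitions (A_i)_{i<n} of E of
   sum_i |(mu2 - mu1)(A_i)| *)
Definition total_variation (mu1 mu2 : {measure set (Borel T) -> \bar R})
    (E : set (Borel T)) : \bar R :=
  ereal_sup [set s | exists (n : nat) (A : nat -> set (Borel T)),
     [/\ (forall i, measurable (A i)), trivIset `I_n A,
         \bigcup_(i in `I_n) A i = E &
         s = (\sum_(i < n) `|mu2 (A i) - mu1 (A i)|)%E]].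

(* support of mu2 - mu1: complement of the largest open set of
   |mu2 - mu1|-measure zero (the union of all such open sets) *)
Definition signed_support (mu1 mu2 : {measure set (Borel T) -> \bar R}) : set T :=
  ~` \bigcup_(N in [set N : set T | open N /\
        total_variation mu1 mu2 N = 0%E]) N.
End Support.

From Pilot Require Import Defs.
From HB Require Import structures.
From mathcomp Require Import all_boot all_order all_algebra.
From mathcomp Require Import all_classical all_reals all_analysis.
From mathcomp Require Import measurable_realfun lra.
Set Implicit Arguments. Unset Strict Implicit. Unset Printing Implicit Defensive.
Import Order.TTheory GRing.Theory Num.Theory.
Import numFieldNormedType.Exports.
Local Open Scope classical_set_scope.
Local Open Scope ring_scope.

(* Put h := (phi1 - phi2)^+, so that phi1 /\ phi2 = phi1 - h and phi1 \/ phi2 = phi2 + h,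
   while pointwise (phi1 /\ phi2)^c + (phi1 \/ phi2)^c <= phi1^c + phi2^c. For the dual
   functional J_i(phi) = int phi dmu_i - int phi^c dnu this gives
     J_1(phi1 /\ phi2) + J_2(phi1 \/ phi2) >= J_1(phi1) + J_2(phi2) + int h d(mu2 - mu1),
   and the last integral is nonnegative because h vanishes off U, where mu1 <= mu2.
   Weak duality J_i <= T_c(mu_i, nu) = J_i(phi_i) forces equality throughout, in particular
   int h dmu1 = int h dmu2. Comparing both sides of h = (h - delta 1_A) + delta 1_A then
   shows that mu1 and mu2 agree on every Borel subset A of the open set {h > delta}, which
   therefore misses the support of mu2 - mu1. *)

Lemma continuous_open_gt (R : realType) (T : topologicalType) (f : T -> R) a :
  continuous f -> open [set x | a < f x].
Proof. by move=> cf; apply: (open_comp _ (@open_gt _ a)) => x _; exact: cf. Qed.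

Section continuous_real_functions.
Context (R : realType) (T : topologicalType) (f g : T -> R).
Hypotheses (cf : continuous f) (cg : continuous g).

Lemma continuous_minr : continuous (fun x => Num.min (f x) (g x)).
Proof. by move=> x; exact: (@continuous_min R T f g x (@cf x) (@cg x)). Qed.

Lemma continuous_maxr : continuous (fun x => Num.max (f x) (g x)).
Proof. by move=> x; exact: (@continuous_max R T f g x (@cf x) (@cg x)). Qed.

Lemma continuous_funrposB : continuous (f \- g)^\+.
Proof.
move=> x; apply: (@continuous_max R T (f \- g) (cst 0)); last exact: cst_continuous.
exact: (cvgB (@cf x) (@cg x)).
Qed.

End continuous_real_functions.

Section borel_measurable.
Context (R : realType) (T : ptopologicalType).

Lemma open_measurable_Borel (A : set T) : open A -> measurable (A : set (Borel T)).
Proof. exact: sub_sigma_algebra. Qed.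

Lemma measurable_Borel_open_gt (f : T -> R) : (forall a, open [set x | a < f x]) ->
  measurable_fun [set: Borel T] (f : Borel T -> R).
Proof.
move=> fgt; apply: (measurability _ (RGenOInfty.measurableE R)).
move=> _ [_ [a ->]] <-; apply: measurableI => //; apply: open_measurable_Borel.
by rewrite preimage_itvoy.
Qed.

Lemma continuous_measurable_Borel (f : T -> R) : continuous f ->
  measurable_fun [set: Borel T] (f : Borel T -> R).
Proof.
by move=> cf; apply: measurable_Borel_open_gt => a; exact: continuous_open_gt.
Qed.

End borel_measurable.

Lemma continuous_compact_bounded (R : realType) (T : topologicalType) (f : T -> R) :
  compact [set: T] -> continuous f -> exists M, forall x, `|f x| <= M.
Proof.
move=> cT cf; have : compact (f @` setT : set R^o).
  by apply: continuous_compact => //; exact: continuous_subspaceT.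
move/compact_bounded => [M [_ HM]]; exists (`|M| + 1) => x.
by apply: (HM (`|M| + 1)); [rewrite (le_lt_trans (ler_norm _)) ?ltrDl | exists x].
Qed.

Section funrpos_min_max.
Context (T : Type) (R : realDomainType) (f g : T -> R).

Lemma min_funrposB x : Num.min (f x) (g x) = f x - (f \- g)^\+ x.
Proof. by rewrite /funrpos /= oppr_max opprB oppr0 addrC addr_minl subrK add0r minC. Qed.

Lemma max_funrposB x : Num.max (f x) (g x) = g x + (f \- g)^\+ x.
Proof. by rewrite /funrpos /= addrC addr_maxl subrK add0r. Qed.

Lemma funrposB_gt0 x : (0 < (f \- g)^\+ x) = (g x < f x).
Proof. by rewrite /funrpos /= lt_max ltxx orbF subr_gt0. Qed.

End funrpos_min_max.

Section integral_monotone.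
Context d (T : measurableType d) (R : realType).
Local Open Scope ereal_scope.

Lemma ge0_le_integral_pointwise (mu : {measure set T -> \bar R}) (f g : T -> \bar R) :
  (forall x, 0 <= f x) -> (forall x, f x <= g x) -> \int[mu]_x f x <= \int[mu]_x g x.
Proof.
move=> f0 fg; rewrite !ge0_integralTE // => [|x]; last exact: le_trans (f0 x) (fg x).
apply: ge_ereal_sup => _ [h hf <-].
by apply: ereal_sup_ubound; exists h => // x; exact: le_trans (hf x) (fg x).
Qed.

Lemma le_integral_pointwise (mu : {measure set T -> \bar R}) (f g : T -> \bar R) :
  (forall x, f x <= g x) -> \int[mu]_x f x <= \int[mu]_x g x.
Proof.
move=> fg; rewrite (integralE _ _ f) (integralE _ _ g); apply: leeB.
  apply: ge0_le_integral_pointwise => x; first exact: funepos_ge0.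
  by apply: (@funepos_le _ _ setT) => //; rewrite inE.
apply: ge0_le_integral_pointwise => x; first exact: funeneg_ge0.
by apply: (@funeneg_le _ _ setT) => //; rewrite inE.
Qed.

Import HBNNSimple.

Lemma ge0_le_integral_measure_on (mu1 mu2 : {measure set T -> \bar R}) (U : set T)
    (f : T -> \bar R) :
  (forall A, measurable A -> A `<=` U -> mu1 A <= mu2 A) ->
  (forall x, 0 <= f x) -> (forall x, 0 < f x -> U x) ->
  \int[mu1]_x f x <= \int[mu2]_x f x.
Proof.
move=> mu12 f0 fU; rewrite !ge0_integralTE //.
apply: ge_ereal_sup => _ [h hf <-].
apply: (@le_trans _ _ (sintegral mu2 h)); last by apply: ereal_sup_ubound; exists h.
rewrite !sintegralE; apply: lee_fsum; first exact: fimfunP.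
move=> _ [x _ <-]; have [->|hx0] := eqVneq (h x) 0%R; first by rewrite !mul0e.
apply: lee_wpmul2l; first by rewrite lee_fin.
apply: mu12; first exact: measurable_sfunP.
move=> y /= hy; apply: fU; apply: lt_le_trans (hf y).
by rewrite hy lte_fin lt_def hx0 /=.
Qed.

End integral_monotone.

Lemma integral_image_measure d d' (X : measurableType d) (Y : measurableType d')
    (R : realType) (pi : {measure set X -> \bar R}) (mu : {measure set Y -> \bar R})
    (p : X -> Y) (f : Y -> \bar R) :
  measurable_fun setT p -> (forall A, measurable A -> pi (p @^-1` A) = mu A) ->
  measurable_fun [set: Y] f -> pi.-integrable setT (f \o p) ->
  (\int[pi]_x f (p x) = \int[mu]_y f y)%E.
Proof.
move=> mp pimu mf ifp.
rewrite [RHS](eq_measure_integral (pushforward pi p)) => [|A mA _]; last by rewrite -pimu.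
have := @integral_pushforward _ _ _ _ R p mp pi setT f mf.
by rewrite preimage_setT => ->.
Qed.

Section finite_measure_Rintegral.
Context d (T : measurableType d) (R : realType).

Lemma bounded_integrable (mu : {measure set T -> \bar R}) (f : T -> R) :
  (mu setT < +oo)%E -> measurable_fun setT f ->
  (exists M, forall x, `|f x| <= M) -> mu.-integrable setT (EFin \o f).
Proof.
move=> mu_fin mf [M fM]; apply: measurable_bounded_integrable => //.
exists M; split; first by rewrite num_real.
by move=> N MN x _; exact: le_trans (fM x) (ltW MN).
Qed.

Implicit Types (mu : {finite_measure set T -> \bar R}) (f : T -> R).

Lemma finite_measure_lty mu : (mu setT < +oo)%E.
Proof. exact/fin_num_fun_lty/fin_num_measure. Qed.
Local Hint Extern 0 (is_true (_ < +oo)%E) => exact: finite_measure_lty : core.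

Lemma EFin_Rintegral mu f : mu.-integrable setT (EFin \o f) ->
  (\int[mu]_x (f x)%:E)%E = (\int[mu]_x f x)%:E.
Proof. by move=> intf; rewrite fineK // integrable_fin_num. Qed.

Lemma Rintegral_indic mu (A : set T) : measurable A ->
  \int[mu]_x \1_A x = fine (mu A).
Proof. by move=> mA; rewrite /Rintegral integral_indic // setIT. Qed.

Lemma Rintegral_add_indic mu f (A : set T) (r : R) : measurable A ->
  measurable_fun setT f -> (exists M, forall x, `|f x| <= M) ->
  \int[mu]_x (f x + r * \1_A x) = \int[mu]_x f x + r * fine (mu A).
Proof.
move=> mA mf bf; have int_f := bounded_integrable (finite_measure_lty mu) mf bf.
have indic_le1 x : `|(\1_A x : R)| <= 1.
  by rewrite /indic; case: (x \in A); rewrite ?normr1 ?normr0.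
have int_A : mu.-integrable setT (EFin \o \1_A).
  by apply: bounded_integrable => //; exists 1.
have int_rA : mu.-integrable setT (EFin \o (fun x => r * \1_A x)).
  apply: bounded_integrable => //; first exact: measurable_funM.
  by exists `|r| => x; rewrite normrM ler_piMr.
by rewrite RintegralD // RintegralZl // Rintegral_indic.
Qed.

Variables (mu1 mu2 : {finite_measure set T -> \bar R}) (U : set T).
Hypothesis mu12 : forall A, measurable A -> A `<=` U -> (mu1 A <= mu2 A)%E.

Lemma le_Rintegral_measure_on f :
  measurable_fun setT f -> (exists M, forall x, `|f x| <= M) ->
  (forall x, 0 <= f x) -> (forall x, 0 < f x -> U x) ->
  \int[mu1]_x f x <= \int[mu2]_x f x.
Proof.
move=> mf bf f0 fU.
rewrite -lee_fin -!EFin_Rintegral ?bounded_integrable //.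
by apply: ge0_le_integral_measure_on mu12 _ _ => x; rewrite ?lee_fin ?lte_fin //; exact: fU.
Qed.

Lemma measure_eq_superlevel f (delta : R) (A : set T) :
  measurable_fun setT f -> (exists M, forall x, `|f x| <= M) ->
  (forall x, 0 <= f x) -> (forall x, 0 < f x -> U x) ->
  \int[mu1]_x f x = \int[mu2]_x f x ->
  0 < delta -> measurable A -> A `<=` [set x | delta < f x] -> mu1 A = mu2 A.
Proof.
move=> mf [M fM] f0 fU eq12 delta0 mA Af.
pose k x := f x - delta * \1_A x.
have kf x : k x <= f x.
  by rewrite /k gerBl mulr_ge0 ?(ltW delta0) // /indic.
have k0 x : 0 <= k x.
  rewrite /k /indic; case: (boolP (x \in A)) => [/set_mem/Af/ltW|_] /=.
    by rewrite mulr1 subr_ge0.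
  by rewrite mulr0 subr0.
have mk : measurable_fun setT k.
  by apply: measurable_funB => //; apply: measurable_funM => //; exact: measurable_indic.
have bk : exists M, forall x, `|k x| <= M.
  by exists M => x; rewrite ger0_norm // (le_trans (kf x)) // (le_trans (ler_norm _)).
have fE mu : \int[mu]_x f x = \int[mu]_x k x + delta * fine (mu A).
  by rewrite -Rintegral_add_indic //; apply: eq_Rintegral => x _; rewrite subrK.
have le_k : \int[mu1]_x k x <= \int[mu2]_x k x.
  by apply: le_Rintegral_measure_on => // x kx; apply: fU; exact: lt_le_trans kx (kf x).
have le_A : fine (mu1 A) <= fine (mu2 A).
  rewrite fine_le ?fin_num_measure //; apply: mu12 => // x /Af /= fx.
  by apply: fU; exact: lt_trans fx.
have eq_A : fine (mu1 A) = fine (mu2 A) by move: eq12; rewrite !fE; nra.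
by rewrite -[mu1 A]fineK ?fin_num_measure // eq_A fineK ?fin_num_measure.
Qed.

End finite_measure_Rintegral.

Section signed_support.
Context (R : realType) (T : ptopologicalType).
Variables mu1 mu2 : {finite_measure set (Borel T) -> \bar R}.

Lemma total_variation_eq0 (N : set (Borel T)) : measurable N ->
  (forall A, measurable A -> A `<=` N -> mu1 A = mu2 A) ->
  Defs.total_variation mu1 mu2 N = 0%E. (* [realfun] also has a [total_variation] *)
Proof.
move=> mN eqN; have eq0 A : measurable A -> A `<=` N -> (`|mu2 A - mu1 A| = 0)%E.
  by move=> mA AN; rewrite eqN // subee ?abse0 // fin_num_measure.
apply/eqP; rewrite eq_le; apply/andP; split.
  apply: ge_ereal_sup => _ [n [A [mA _ UA ->]]]; rewrite big1 // => i _.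
  by apply: eq0 => // x Ax; rewrite -UA; exists (nat_of_ord i) => //=; exact: ltn_ord.
apply: ereal_sup_ubound; exists 1%N, (fun=> N); split => //.
- by move=> [|i] [|j].
- by apply/seteqP; split => [x [] | x Nx]; last exists 0%N.
- by rewrite big_ord1 eq0.
Qed.

Lemma notin_signed_support (N : set T) x : open N -> N x ->
  (forall A : set (Borel T), measurable A -> A `<=` N -> mu1 A = mu2 A) ->
  ~ signed_support mu1 mu2 x.
Proof.
move=> oN Nx eqN; apply; exists N => //; split => //.
by apply: total_variation_eq0 => //; exact: open_measurable_Borel.
Qed.

End signed_support.

Section c_transform.
Context (R : realType) (T1 T2 : ptopologicalType) (c : T1 * T2 -> R).

Lemma ctrans_le (phi : T1 -> R) y r :
  (forall x, phi x - c (x, y) <= r) -> ctrans c phi y <= r.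
Proof.
move=> le_r; apply: ge_sup; first by exists (phi point - c (point, y)), point.
by move=> _ [x _ <-].
Qed.

Hypotheses (cT1 : compact [set: T1]) (cT2 : compact [set: T2]) (hc : continuous c).

Let c_bounded : exists B, forall z, `|c z| <= B.
Proof. by apply: continuous_compact_bounded hc; rewrite -setXTT; exact: compact_setX. Qed.

Lemma ctrans_ge (phi : T1 -> R) x y : continuous phi ->
  phi x - c (x, y) <= ctrans c phi y.
Proof.
move=> cphi; have [A phiA] := continuous_compact_bounded cT1 cphi.
have [B cB] := c_bounded; apply: ub_le_sup; last by exists x.
exists (A + B) => _ [z _ <-]; have := phiA z; have := cB (z, y).
by rewrite !ler_norml => /andP[? ?] /andP[? ?]; lra.
Qed.

Lemma ctrans_bounded (phi : T1 -> R) : continuous phi ->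
  exists M, forall y, `|ctrans c phi y| <= M.
Proof.
move=> cphi; have [A phiA] := continuous_compact_bounded cT1 cphi.
have [B cB] := c_bounded; exists (A + B) => y; rewrite ler_norml; apply/andP; split.
  have := ctrans_ge point y cphi; have := phiA point; have := cB (point, y).
  by rewrite !ler_norml => /andP[? ?] /andP[? ?]; lra.
apply: ctrans_le => x; have := phiA x; have := cB (x, y).
by rewrite !ler_norml => /andP[? ?] /andP[? ?]; lra.
Qed.

Lemma open_ctrans_gt (phi : T1 -> R) a : continuous phi ->
  open [set y | a < ctrans c phi y].
Proof.
move=> cphi; have -> : [set y | a < ctrans c phi y] =
    \bigcup_x [set y | a < phi x - c (x, y)].
  apply/seteqP; split => y /=; last first.
    by move=> [x _ ax]; exact: lt_le_trans ax (ctrans_ge _ _ cphi).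
  move=> /sup_gt [|_ [x _ <-] ax]; last by exists x.
  by exists (phi point - c (point, y)), point.
apply: bigcup_open => x _; apply: continuous_open_gt => y.
apply: cvgB; first exact: cvg_cst.
by apply: continuous_comp; [exact: cvg_pair (cvg_cst x) cvg_id | exact: hc].
Qed.

Lemma measurable_ctrans (phi : T1 -> R) : continuous phi ->
  measurable_fun [set: Borel T2] (ctrans c phi : Borel T2 -> R).
Proof. by move=> cphi; apply: measurable_Borel_open_gt => a; exact: open_ctrans_gt. Qed.

Lemma le_ctrans (phi psi : T1 -> R) y : continuous psi ->
  (forall x, phi x <= psi x) -> ctrans c phi y <= ctrans c psi y.
Proof.
move=> cpsi le_phi; apply: ctrans_le => x.
by apply: le_trans (ctrans_ge x y cpsi); rewrite lerD2r.
Qed.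

Lemma ctrans_min_max (phi psi : T1 -> R) y : continuous phi -> continuous psi ->
  ctrans c (fun x => Num.min (phi x) (psi x)) y +
  ctrans c (fun x => Num.max (phi x) (psi x)) y <= ctrans c phi y + ctrans c psi y.
Proof.
move=> cphi cpsi.
pose m x := Num.min (phi x) (psi x).
have min_le : ctrans c m y <= Num.min (ctrans c phi y) (ctrans c psi y).
  by rewrite le_min !le_ctrans // => x; rewrite ge_min lexx ?orbT.
have max_le : ctrans c (fun x => Num.max (phi x) (psi x)) y <=
    Num.max (ctrans c phi y) (ctrans c psi y).
  apply: ctrans_le => x; rewrite le_max.
  by rewrite /Num.max /Order.max; case: ifPn => _; rewrite ctrans_ge ?orbT.
by rewrite -[leRHS]addr_min_max lerD.
Qed.

End c_transform.

Section dual_value.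
Context (R : realType) (T1 T2 : ptopologicalType) (c : T1 * T2 -> R).
Hypotheses (cT1 : compact [set: T1]) (cT2 : compact [set: T2]) (hc : continuous c).
Variable nu : {finite_measure set (Borel T2) -> \bar R}.

Definition dual_value (mu : {finite_measure set (Borel T1) -> \bar R}) (phi : T1 -> R) :=
  \int[mu]_x phi x - \int[nu]_y ctrans c phi y.

Lemma continuous_integrable (mu : {finite_measure set (Borel T1) -> \bar R}) (phi : T1 -> R) :
  continuous phi -> mu.-integrable setT (EFin \o phi).
Proof.
move=> cphi; apply: bounded_integrable; first exact: finite_measure_lty.
  exact: continuous_measurable_Borel.
exact: continuous_compact_bounded.
Qed.

Lemma ctrans_integrable (phi : T1 -> R) : continuous phi ->
  nu.-integrable setT (EFin \o ctrans c phi).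
Proof.
move=> cphi; apply: bounded_integrable; first exact: finite_measure_lty.
  exact: measurable_ctrans.
exact: ctrans_bounded.
Qed.

Lemma dual_valueE (mu : {finite_measure set (Borel T1) -> \bar R}) (phi : T1 -> R) :
  continuous phi ->
  (\int[mu]_x (phi x)%:E - \int[nu]_y (ctrans c phi y)%:E)%E = (dual_value mu phi)%:E.
Proof.
by move=> cphi; rewrite !EFin_Rintegral ?continuous_integrable ?ctrans_integrable.
Qed.

Lemma weak_duality (mu : {finite_measure set (Borel T1) -> \bar R}) (phi : T1 -> R) :
  continuous phi -> ((dual_value mu phi)%:E <= ot_cost c mu nu)%E.
Proof.
move=> cphi; rewrite -dual_valueE //.
apply: le_ereal_inf_tmp => _ [pi [pi_mu pi_nu] <-].
have pi_fin : (pi setT < +oo)%E by rewrite -setXTT pi_mu //; exact: finite_measure_lty.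
have [A phiA] := continuous_compact_bounded cT1 cphi.
have [B phicB] := ctrans_bounded cT1 cT2 hc cphi.
have int_fst : pi.-integrable setT ((EFin \o phi) \o fst).
  apply: bounded_integrable => //; last by exists A => z; exact: phiA.
  exact: measurableT_comp (continuous_measurable_Borel cphi) measurable_fst.
have int_snd : pi.-integrable setT ((EFin \o ctrans c phi) \o snd).
  apply: bounded_integrable => //; last by exists B => z; exact: phicB.
  exact: measurableT_comp (measurable_ctrans cT1 cT2 hc cphi) measurable_snd.
have E_fst : (\int[pi]_z (phi z.1)%:E = \int[mu]_x (phi x)%:E)%E.
  apply: integral_image_measure measurable_fst _ _ int_fst.
    by move=> S mS; rewrite -setXT pi_mu.
  by apply/measurable_EFinP; exact: continuous_measurable_Borel.
have E_snd : (\int[pi]_z (ctrans c phi z.2)%:E = \int[nu]_y (ctrans c phi y)%:E)%E.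
  apply: integral_image_measure measurable_snd _ _ int_snd.
    by move=> S mS; rewrite -setTX pi_nu.
  by apply/measurable_EFinP; exact: measurable_ctrans.
rewrite -E_fst -E_snd -integralB_EFin //.
(* [c] need not be measurable for the product of the Borel sigma-algebras. *)
apply: le_integral_pointwise => -[x y] /=.
by rewrite lee_fin lerBlDl addrC -lerBlDl ctrans_ge.
Qed.

Lemma dual_value_min_max (mu1 mu2 : {finite_measure set (Borel T1) -> \bar R})
    (phi1 phi2 : T1 -> R) : continuous phi1 -> continuous phi2 ->
  dual_value mu1 phi1 + dual_value mu2 phi2 +
    (\int[mu2]_x (phi1 \- phi2)^\+ x - \int[mu1]_x (phi1 \- phi2)^\+ x) <=
  dual_value mu1 (fun x => Num.min (phi1 x) (phi2 x)) +
  dual_value mu2 (fun x => Num.max (phi1 x) (phi2 x)).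
Proof.
move=> cphi1 cphi2; have cmin := continuous_minr cphi1 cphi2.
have cmax := continuous_maxr cphi1 cphi2; have cpos := continuous_funrposB cphi1 cphi2.
have int_min : \int[mu1]_x Num.min (phi1 x) (phi2 x) =
    \int[mu1]_x phi1 x - \int[mu1]_x (phi1 \- phi2)^\+ x.
  rewrite -RintegralB ?continuous_integrable //.
  by apply: eq_Rintegral => x _; exact: min_funrposB.
have int_max : \int[mu2]_x Num.max (phi1 x) (phi2 x) =
    \int[mu2]_x phi2 x + \int[mu2]_x (phi1 \- phi2)^\+ x.
  rewrite -RintegralD ?continuous_integrable //.
  by apply: eq_Rintegral => x _; exact: max_funrposB.
have int_ctrans :
    \int[nu]_y ctrans c (fun x => Num.min (phi1 x) (phi2 x)) y +
    \int[nu]_y ctrans c (fun x => Num.max (phi1 x) (phi2 x)) y <=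
    \int[nu]_y ctrans c phi1 y + \int[nu]_y ctrans c phi2 y.
  rewrite -!RintegralD ?ctrans_integrable //.
  apply: le_Rintegral => //; last by move=> y _; exact: ctrans_min_max.
    exact: (integrableD _ (ctrans_integrable cmin) (ctrans_integrable cmax)).
  exact: (integrableD _ (ctrans_integrable cphi1) (ctrans_integrable cphi2)).
by move: int_min int_max int_ctrans; rewrite /dual_value /=; lra.
Qed.

End dual_value.

Section min_max_potentials.
Context (R : realType) (T1 T2 : ptopologicalType) (c : T1 * T2 -> R).
Hypotheses (cT1 : compact [set: T1]) (cT2 : compact [set: T2]) (hc : continuous c).
Variables (mu1 mu2 : {finite_measure set (Borel T1) -> \bar R}).
Variables (nu : {finite_measure set (Borel T2) -> \bar R}) (phi1 phi2 : T1 -> R).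
Hypotheses (hphi1 : kpotentials c mu1 nu phi1) (hphi2 : kpotentials c mu2 nu phi2).
Variable U : set T1.
Hypothesis hmu : forall A : set (Borel T1), measurable A -> A `<=` U -> (mu1 A <= mu2 A)%E.
Hypothesis hphi : forall x, ~ U x -> phi1 x <= phi2 x.

Let cphi1 : continuous phi1 := hphi1.1.
Let cphi2 : continuous phi2 := hphi2.1.
Let cpos := continuous_funrposB cphi1 cphi2.

Let opt1 : (dual_value c nu mu1 phi1)%:E = ot_cost c mu1 nu.
Proof. by rewrite -(dual_valueE cT1 cT2 hc nu mu1 cphi1); exact: hphi1.2. Qed.

Let opt2 : (dual_value c nu mu2 phi2)%:E = ot_cost c mu2 nu.
Proof. by rewrite -(dual_valueE cT1 cT2 hc nu mu2 cphi2); exact: hphi2.2. Qed.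

Let funrposB_U x : 0 < (phi1 \- phi2)^\+ x -> U x.
Proof. by rewrite funrposB_gt0 => lt21; apply: contrapT => /hphi; rewrite leNgt lt21. Qed.

Lemma dual_values_min_max :
  [/\ dual_value c nu mu1 (fun x => Num.min (phi1 x) (phi2 x)) = dual_value c nu mu1 phi1,
      dual_value c nu mu2 (fun x => Num.max (phi1 x) (phi2 x)) = dual_value c nu mu2 phi2 &
      \int[mu1]_x (phi1 \- phi2)^\+ x = \int[mu2]_x (phi1 \- phi2)^\+ x].
Proof.
have := weak_duality cT1 cT2 hc nu mu1 (continuous_minr cphi1 cphi2).
have := weak_duality cT1 cT2 hc nu mu2 (continuous_maxr cphi1 cphi2).
rewrite -opt1 -opt2 !lee_fin => le_max le_min.
have le_pos : \int[mu1]_x (phi1 \- phi2)^\+ x <= \int[mu2]_x (phi1 \- phi2)^\+ x.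
  apply: (le_Rintegral_measure_on hmu) => //.
  - exact: continuous_measurable_Borel.
  - exact: continuous_compact_bounded.
have := dual_value_min_max cT1 cT2 hc nu mu1 mu2 cphi1 cphi2.
by move=> ge_sum; split; lra.
Qed.

Lemma kpotentials_min : kpotentials c mu1 nu (fun x => Num.min (phi1 x) (phi2 x)).
Proof.
have [eq_min _ _] := dual_values_min_max; split; first exact: continuous_minr.
by rewrite (dual_valueE cT1 cT2 hc nu mu1 (continuous_minr cphi1 cphi2)) eq_min opt1.
Qed.

Lemma kpotentials_max : kpotentials c mu2 nu (fun x => Num.max (phi1 x) (phi2 x)).
Proof.
have [_ eq_max _] := dual_values_min_max; split; first exact: continuous_maxr.
by rewrite (dual_valueE cT1 cT2 hc nu mu2 (continuous_maxr cphi1 cphi2)) eq_max opt2.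
Qed.

Lemma le_on_signed_support x : signed_support mu1 mu2 x -> phi1 x <= phi2 x.
Proof.
move=> x_supp; rewrite leNgt; apply/negP => lt21; have [_ _ eq_pos] := dual_values_min_max.
pose delta := (phi1 \- phi2)^\+ x / 2.
have delta_gt0 : 0 < delta by rewrite divr_gt0 ?funrposB_gt0.
apply: (notin_signed_support (N := [set y | delta < (phi1 \- phi2)^\+ y])) x_supp.
- exact: continuous_open_gt.
- by rewrite /= ltr_pdivrMr // ltr_pMr ?ltr1n ?funrposB_gt0.
move=> A mA A_sub; apply: (measure_eq_superlevel hmu) A_sub => //.
- exact: continuous_measurable_Borel.
- exact: continuous_compact_bounded.
Qed.

End min_max_potentials.

Theorem theorem3p1 (R : realType) (T1 T2 : pseudoPMetricType R)
  (hT1 : hausdorff_space T1) (hT2 : hausdorff_space T2)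
  (cT1 : compact [set: T1]) (cT2 : compact [set: T2])
  (c : T1 * T2 -> R) (hc : continuous c)
  (mu1 mu2 : probability (Borel T1) R) (nu : probability (Borel T2) R)
  (phi1 phi2 : T1 -> R)
  (hphi1 : kpotentials c mu1 nu phi1) (hphi2 : kpotentials c mu2 nu phi2)
  (U : set (Borel T1)) (mU : measurable U)
  (hmu : forall A : set (Borel T1), measurable A -> A `<=` U -> (mu1 A <= mu2 A)%E)
  (hphi : forall x : T1, ~ U x -> phi1 x <= phi2 x) :
  [/\ kpotentials c mu1 nu (fun x => Num.min (phi1 x) (phi2 x)),
      kpotentials c mu2 nu (fun x => Num.max (phi1 x) (phi2 x)) &
      forall x : T1, signed_support mu1 mu2 x -> phi1 x <= phi2 x].
Proof.
split.
- exact: (kpotentials_min cT1 cT2 hc hphi1 hphi2 hmu hphi).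
- exact: (kpotentials_max cT1 cT2 hc hphi1 hphi2 hmu hphi).
- exact: (le_on_signed_support cT1 cT2 hc hphi1 hphi2 hmu hphi).
Qed.
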